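(* Let $R$ be a commutative local ring whose maximal ideal $\mathfrak{m}$ is principal with $\mathfrak{m}^2 = 0$, and fix a generator $r$ of $\mathfrak{m}$. Let $X$ be a perfect chain complex over $R$. Then there is an isomorphism of chain complexes $X \cong P \oplus Q$, where $P$ is acyclic and $Q$ is isomorphic to a finite direct sum of complexes of the form $\Sigma^i E_j$ with $i, j \geq 0$.
   Context: Chain complexes are non-negatively graded chain complexes of $R$-modules, with differentials lowering degree. A chain complex is perfect if it consists of projective modules in each degree and $\bigoplus_i X_i$ is finitely generated. Acyclic means all homology groups vanish. For integers $i, j \geq 0$, $\Sigma^i E_j$ is the complex with $(\Sigma^i E_j)_n = R$ for $i \leq n \leq i+j$ and $0$ otherwise, with every differential $R \to R$ given by multiplication by $(-1)^i r$ (the isomorphism type does not depend on the choice of $r$). In particular $E_j = \Sigma^0 E_j$ has $R$ in degrees $0, \dots, j$ with differentials multiplication by $r$. *)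

From HB Require Import structures.
From mathcomp Require Import all_boot all_algebra.
Set Implicit Arguments. Unset Strict Implicit. Unset Printing Implicit Defensive.
Import GRing.Theory.
Local Open Scope ring_scope.

Record gmod (R : comUnitRingType) := GMod {
  gobj :> nat -> lmodType R;
  gd : forall n, gobj n.+1 -> gobj n }.

Definition is_complex (R : comUnitRingType) (X : gmod R) : Prop :=
  (forall n, linear (@gd R X n)) /\
  (forall n (x : X n.+2), gd (gd x) = 0).

Definition projective (R : comUnitRingType) (M : lmodType R) : Prop :=
  forall (A B : lmodType R) (g : A -> B) (f : M -> B),
    linear g -> linear f -> (forall b, exists a, g a = b) ->
    exists h : M -> A, linear h /\ forall m, g (h m) = f m.

(* Component in degree n of a homogeneous element u of \bigoplus_i X_i. *)
Definition comp_deg (R : comUnitRingType) (X : gmod R) (n : nat)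
  (u : {i : nat & X i}) : X n := untag (T_ := fun i => X i) 0 (@id (X n)) u.

(* \bigoplus_i X_i is finitely generated: a finite family of homogeneous
   elements generates it (equivalently, generates each degree n summand). *)
Definition total_fg (R : comUnitRingType) (X : gmod R) : Prop :=
  exists (K : nat) (g : 'I_K -> {i : nat & X i}),
    forall n (x : X n), exists c : 'I_K -> R,
      x = \sum_(k < K) c k *: comp_deg n (g k).

Definition perfect (R : comUnitRingType) (X : gmod R) : Prop :=
  is_complex X /\ (forall n, projective (X n)) /\ total_fg X.

(* All homology groups vanish (H_0 = X_0 / im d_0). *)
Definition acyclic (R : comUnitRingType) (X : gmod R) : Prop :=
  (forall x : X 0, exists y, gd y = x) /\
  (forall n (x : X n.+1), gd x = 0 -> exists y, gd y = x).

Definition chain_iso (R : comUnitRingType) (X Y : gmod R) : Prop :=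
  exists f : forall n, X n -> Y n,
    (forall n, linear (f n)) /\ (forall n, bijective (f n)) /\
    (forall n (x : X n.+1), f n (gd x) = gd (f n.+1 x)).

Definition gsum (R : comUnitRingType) (P Q : gmod R) : gmod R :=
  @GMod R (fun n => (P n * Q n)%type : lmodType R)
    (fun n x => (gd x.1, gd x.2)).

(* Finite direct sum \bigoplus_k Sigma^{i_k} E_{j_k}, for s = [:: (i_k, j_k)]. *)
Definition in_range (ij : nat * nat) (n : nat) : bool :=
  ((ij.1 <= n) && (n <= ij.1 + ij.2))%N.

Definition act (s : seq (nat * nat)) (n : nat) : finType :=
  {k : 'I_(size s) | in_range (nth (0, 0) s k) n}.

Definition sumE_d (R : comUnitRingType) (r : R) (s : seq (nat * nat)) (n : nat)
  (f : {ffun act s n.+1 -> R^o}) : {ffun act s n -> R^o} :=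
  [ffun k : act s n =>
     (match (insub (val k) : option (act s n.+1)) with
      | Some k' => ((-1) ^+ (nth (0, 0) s (val k)).1 * r) * f k'
      | None => 0
      end : R^o)].

Definition sumE (R : comUnitRingType) (r : R) (s : seq (nat * nat)) : gmod R :=
  @GMod R (fun n => ({ffun act s n -> R^o} : lmodType R)) (@sumE_d R r s).

(* R is local: the non-units form an ideal (closed under addition), which is
   then the unique maximal ideal m.  (R is non-trivial as a comUnitRingType.) *)
Definition local_ring (R : comUnitRingType) : Prop :=
  forall x y : R, x \isn't a GRing.unit -> y \isn't a GRing.unit ->
    x + y \isn't a GRing.unit.

Definition in_max_ideal (R : comUnitRingType) (x : R) : bool :=
  x \isn't a GRing.unit.

From mathcomp Require Import all_boot all_algebra.
From mathcomp Require Import ring zify.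
From Stdlib Require Import Classical ClassicalEpsilon.
Set Implicit Arguments. Unset Strict Implicit. Unset Printing Implicit Defensive.
Import GRing.Theory.
Local Open Scope ring_scope.

(* We maintain a splitting [X = A (+) B (+) im p] of the complex, where [A] is
   a sum of copies of [Sigma^i E_1] with differential [+-1] (hence acyclic),
   [B] a sum of copies of [Sigma^i E_j] with differential [+-r], and the
   residual [im p] a subcomplex spanned by finitely many generators.  While
   [p <> 0] we split off one more summand and drop one generator.  If some
   residual [x] has [d x] not divisible by [r] within the residual, then [x]
   and [d x] span a copy of [Sigma^t E_1].  Otherwise [d = r Delta] on the
   residual; starting from an element of top degree that is not divisible by
   [r] and descending along [Delta] (indivisibility persists because
   [r^2 = 0]) yields a copy of [Sigma^i E_j].  Such a summand splits off
   because an element not divisible by [r] has a unit coordinate, hence a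
   linear functional taking the value [1] on it; in the lowest degree of the
   summand, locality of [R] makes one residual generator redundant. *)

Section LinearFor.
Variables (R : pzRingType) (U : lmodType R) (V : zmodType).
Variable s : GRing.Scale.law R V.
Variable f : U -> V.
Hypothesis hf : linear_for s f.

Lemma linear_forB u v : f (u - v) = f u - f v.
Proof. exact: zmod_morphism_linear. Qed.

Lemma linear_for0 : f 0 = 0.
Proof. by have := linear_forB 0 0; rewrite !subrr. Qed.

Lemma linear_forN u : f (- u) = - f u.
Proof. by rewrite -[- u]sub0r linear_forB linear_for0 sub0r. Qed.

Lemma linear_forD u v : f (u + v) = f u + f v.
Proof. by rewrite -{1}[v]opprK linear_forB linear_forN opprK. Qed.

Lemma linear_forZ a u : f (a *: u) = s a (f u).
Proof. exact: scalable_linear. Qed.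

Lemma linear_for_sum I (rs : seq I) (P : pred I) (F : I -> U) :
  f (\sum_(i <- rs | P i) F i) = \sum_(i <- rs | P i) f (F i).
Proof. exact: (big_morph f linear_forD linear_for0). Qed.

End LinearFor.

Lemma mulr_sign_sq (R : pzRingType) n : (-1) ^+ n * (-1) ^+ n = 1 :> R.
Proof. by rewrite -expr2 sqrr_sign. Qed.

Lemma local_unit_summand (R : comUnitRingType) (I : finType) (P : pred I)
    (F : I -> R) :
  local_ring R -> \sum_(i | P i) F i \is a GRing.unit ->
  exists2 i, P i & F i \is a GRing.unit.
Proof.
move=> hloc hU; apply/exists_inP; move: hU; apply: contraTT => /exists_inPn hF.
by apply: (big_ind (fun x : R => x \isn't a GRing.unit)); rewrite ?unitr0.
Qed.

Lemma sum_drop_redundant (R : comUnitRingType) (V : lmodType R) (I : finType)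
    (A : {set I}) (w : I -> V) (b : I -> R) (l0 : I) :
  l0 \in A -> b l0 \is a GRing.unit -> \sum_(l in A) b l *: w l = 0 ->
  forall a : I -> R, exists a' : I -> R,
    \sum_(l in A) a l *: w l = \sum_(l in A :\ l0) a' l *: w l.
Proof.
move=> Al0 bl0 rel a.
exists (fun l => a l - a l0 * (b l0)^-1 * b l).
have drop0 (c : I -> R) :
    \sum_(l in A) c l *: w l = c l0 *: w l0 + \sum_(l in A :\ l0) c l *: w l.
  exact: big_setD1.
have wl0 : w l0 = - ((b l0)^-1 *: \sum_(l in A :\ l0) b l *: w l).
  have e : b l0 *: w l0 = - \sum_(l in A :\ l0) b l *: w l.
    by apply/eqP; rewrite -addr_eq0 -drop0 rel.
  by rewrite -[w l0]scale1r -(mulVr bl0) -scalerA e scalerN.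
rewrite drop0 wl0; under [RHS]eq_bigr do rewrite scalerBl.
rewrite sumrB addrC scalerN scalerA scaler_sumr; congr (_ - _).
by apply: eq_bigr => l _; rewrite scalerA.
Qed.

Definition lengths_one (s : seq (nat * nat)) :=
  forall k, (k < size s)%N -> (nth (0, 0) s k).2 = 1%N.

Section ModelComplex.
Variable R : comUnitRingType.
Implicit Types (s : seq (nat * nat)) (c : R).

(* Coefficients are indexed by [k : nat], with junk value [0] for indices
   that are out of range or whose summand vanishes in degree [n]. *)
Definition sumE_coef s n (f : {ffun act s n -> R^o}) (k : nat) : R :=
  if insub k is Some k1 then
    if (insub k1 : option (act s n)) is Some k2 then f k2 else 0
  else 0.

Lemma sumE_coefE s n (f : {ffun act s n -> R^o}) (k : act s n) :
  sumE_coef f (val (val k)) = f k.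
Proof. by rewrite /sumE_coef !valK. Qed.

Lemma sumE_coef_ffun s n (a : nat -> R) (k : 'I_(size s)) :
  in_range (nth (0, 0) s k) n ->
  sumE_coef ([ffun k' : act s n => a (val k')] : {ffun act s n -> R^o}) k = a k.
Proof. by move=> hk; rewrite /sumE_coef valK insubT ffunE. Qed.

Lemma sumE_coefD s n (a : R) (f f' : {ffun act s n -> R^o}) k :
  sumE_coef (a *: f + f') k = a * sumE_coef f k + sumE_coef f' k.
Proof.
rewrite /sumE_coef; case: (insub k) => [k1|]; last by rewrite mulr0 addr0.
by case: (insub k1) => [k2|]; rewrite ?ffunE ?mulr0 ?addr0.
Qed.

Lemma sumE_coef_d c s n (f : {ffun act s n.+1 -> R^o}) (k : 'I_(size s)) :
  sumE_coef (sumE_d c f) k =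
  if in_range (nth (0, 0) s k) n && in_range (nth (0, 0) s k) n.+1
  then ((-1) ^+ (nth (0, 0) s k).1 * c) * sumE_coef f k else 0.
Proof.
rewrite /sumE_coef valK.
case: insubP => [k2 h2 e2|h2]; last by rewrite (negPf h2).
rewrite h2 /= ffunE e2.
by case: insubP => [k3 h3 _|h3]; rewrite ?h3 // (negPf h3).
Qed.

Lemma sumE_d_linear c s n : linear (@sumE_d R c s n).
Proof.
move=> a f f'; apply/ffunP => k; rewrite !ffunE.
case: insub => [k'|]; rewrite ?ffunE /=; last by rewrite scaler0 addr0.
by rewrite mulrDr mulrCA.
Qed.

Lemma sumE_is_complex c s : c * c = 0 \/ lengths_one s -> is_complex (sumE c s).
Proof.
move=> hcs; split=> [n|n f]; first exact: sumE_d_linear.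
apply/ffunP => k; rewrite !ffunE.
case: insubP => [k1 h1 e1|] //; rewrite ffunE.
case: insubP => [k2 h2 _|]; last by rewrite mulr0.
have e : val k1 = val k := e1; rewrite e.
case: hcs => [cc|j1].
  by rewrite mulrA mulrACA mulr_sign_sq cc mulr0 mul0r.
have := valP k; move: h2; rewrite /= e /in_range j1 ?ltn_ord //.
by case: (nth _ _ _) => i0 j0 /=; lia.
Qed.

Definition sumE_lift s m (x : {ffun act s m -> R^o}) : {ffun act s m.+1 -> R^o} :=
  [ffun k : act s m.+1 => (-1) ^+ (nth (0, 0) s (val k)).1 * sumE_coef x (val k)].

Lemma sumE_liftK s m (x : {ffun act s m -> R^o}) (k : act s m) :
  in_range (nth (0, 0) s (val k)) m.+1 -> sumE_d 1 (sumE_lift x) k = x k.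
Proof.
move=> hk; rewrite ffunE insubT ffunE sumE_coefE.
by rewrite mulr1 mulrA mulr_sign_sq mul1r.
Qed.

Lemma sumE_acyclic s : lengths_one s -> acyclic (sumE (1 : R) s).
Proof.
move=> hj; split=> [x|n x hx]; exists (sumE_lift x); apply/ffunP => k.
  rewrite sumE_liftK //; have := valP k; have := hj (val k) (ltn_ord _).
  by rewrite /in_range; case: (nth _ _ _) => i0 j0 /= ->; lia.
have [hk2|hk2] := boolP (in_range (nth (0, 0) s (val k)) n.+2).
  by rewrite sumE_liftK.
(* At the top of its summand, [d x = 0] forces the coefficient of [x] to vanish. *)
have hkn : in_range (nth (0, 0) s (val k)) n.
  move: hk2 (valP k) (hj (val k) (ltn_ord _)); rewrite /in_range.
  by case: (nth _ _ _) => i0 j0 /= ? ? ?; lia.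
have := congr1 (fun F : {ffun act s n -> R^o} => F (Sub (val k) hkn)) hx.
rewrite /= !ffunE (_ : insub _ = Some k); last by rewrite SubK valK.
rewrite insubN // mulr1 => e.
by rewrite -[x k](signrMK (nth (0, 0) s (val k)).1) e mulr0.
Qed.

End ModelComplex.

Section Pieces.
Variables (R : comUnitRingType) (X : gmod R).
Hypothesis dlin : forall n, linear (@gd R X n).
Arguments dlin : clear implicits.
Implicit Types (s : seq (nat * nat)) (V : nat -> forall n, X n) (u : forall n, X n)
  (a b : nat -> R).

(* [V k] is the image in [X] of the generator of the k-th summand
   [Sigma^i E_j] of [sumE c s], and [pieces_comb s V a] the image of the
   element with coefficients [a]. *)
Definition pieces_comb s V a n : X n :=
  \sum_(k < size s | in_range (nth (0, 0) s k) n) a k *: V k n.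

Definition extend_pieces s V u : nat -> forall n, X n :=
  fun k => if k == size s then u else V k.

Definition pieces_chain (c : R) s V :=
  forall k, (k < size s)%N ->
  let: (i, j) := nth (0, 0) s k in
  (forall n, (i <= n < i + j)%N -> gd (V k n.+1) = ((-1) ^+ i * c) *: V k n) /\
  (forall m, i = m.+1 -> gd (V k m.+1) = 0).

Lemma pieces_comb_rcons s V ij u a n :
  pieces_comb (rcons s ij) (extend_pieces s V u) a n =
  pieces_comb s V a n + (if in_range ij n then a (size s) *: u n else 0).
Proof.
rewrite /pieces_comb size_rcons big_mkcond big_ord_recr /=.
rewrite nth_rcons ltnn eqxx /extend_pieces eqxx; congr (_ + _).
rewrite [RHS]big_mkcond; apply: eq_bigr => i _.
by rewrite nth_rcons ltn_ord (ltn_eqF (ltn_ord i)).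
Qed.

Lemma pieces_chain_rcons c s V i j u :
  pieces_chain c s V ->
  (forall n, (i <= n < i + j)%N -> gd (u n.+1) = ((-1) ^+ i * c) *: u n) ->
  (forall m, i = m.+1 -> gd (u m.+1) = 0) ->
  pieces_chain c (rcons s (i, j)) (extend_pieces s V u).
Proof.
move=> hV hu hu0 k; rewrite size_rcons ltnS leq_eqVlt => /orP [/eqP -> | hk].
  by rewrite nth_rcons ltnn eqxx /extend_pieces eqxx.
by rewrite nth_rcons hk /extend_pieces (ltn_eqF hk); exact: hV.
Qed.

Lemma eq_pieces_comb s V a b n : (forall k, (k < size s)%N -> a k = b k) ->
  pieces_comb s V a n = pieces_comb s V b n.
Proof. by move=> eq_ab; apply: eq_bigr => k _; rewrite eq_ab. Qed.

Lemma pieces_comb0 s V a n :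
  (forall k, (k < size s)%N -> in_range (nth (0, 0) s k) n -> a k = 0) ->
  pieces_comb s V a n = 0.
Proof. by move=> a0; apply: big1 => k hk; rewrite a0 // scale0r. Qed.

Lemma pieces_combB s V a b n :
  pieces_comb s V (fun k => a k - b k) n =
  pieces_comb s V a n - pieces_comb s V b n.
Proof. by rewrite /pieces_comb -sumrB; apply: eq_bigr => k _; rewrite scalerBl. Qed.

Lemma pieces_comb_coefD s V n (c : R) (f f' : {ffun act s n -> R^o}) :
  pieces_comb s V (sumE_coef (c *: f + f')) n =
  c *: pieces_comb s V (sumE_coef f) n + pieces_comb s V (sumE_coef f') n.
Proof.
rewrite /pieces_comb scaler_sumr -big_split; apply: eq_bigr => k _.
by rewrite sumE_coefD scalerDl scalerA.
Qed.

Lemma pieces_comb_coef_ffun s V n a :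
  pieces_comb s V
    (sumE_coef ([ffun k : act s n => a (val k)] : {ffun act s n -> R^o})) n =
  pieces_comb s V a n.
Proof. by apply: eq_bigr => k hk; rewrite sumE_coef_ffun. Qed.

Lemma pieces_comb_d c s V n (f : {ffun act s n.+1 -> R^o}) : pieces_chain c s V ->
  pieces_comb s V (sumE_coef (sumE_d c f)) n =
  gd (pieces_comb s V (sumE_coef f) n.+1).
Proof.
move=> hV; rewrite /pieces_comb (linear_for_sum (dlin n)).
rewrite big_mkcond [RHS]big_mkcond; apply: eq_bigr => k _; rewrite sumE_coef_d.
have := hV k (ltn_ord k); rewrite /in_range.
case: (nth (0, 0) s k) => i j /= [hd hd0].
case hn: (i <= n <= i + j)%N; case hn1: (i <= n.+1 <= i + j)%N;
  rewrite /= ?scale0r //.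
- rewrite (linear_forZ (dlin n)) /= hd ?scalerA 1?(mulrC (sumE_coef f k)) //.
  by apply/andP; lia.
- by rewrite (linear_forZ (dlin n)) /= (hd0 n) ?scaler0 //; lia.
Qed.

End Pieces.

Section Splitting.
Variables (R : comUnitRingType) (X : gmod R).
Hypothesis dlin : forall n, linear (@gd R X n).
Arguments dlin : clear implicits.
Variables (K : nat) (g : forall n, 'I_K -> X n).
Arguments g : clear implicits.
Variable N : nat.
Hypothesis bound : forall n, (N < n)%N -> forall x : X n, x = 0.
Hypothesis hloc : local_ring R.

Implicit Types (p : forall n, X n -> X n) (S : nat -> {set 'I_K})
  (s : seq (nat * nat)) (V : nat -> forall n, X n) (u : forall n, X n).

(* [p] is a projection onto a residual subcomplex, spanned in degree [n] by
   the projected generators indexed by [S n]; its kernel is freely generated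
   by the pieces [VA] and [VB] of summands [sumE cA sA] and [sumE cB sB]. *)
Record partial_split p S sA VA (cA : R) sB VB (cB : R) : Prop := {
  ps_linear : forall n, linear (p n);
  ps_idem : forall n x, p n (p n x) = p n x;
  ps_closed : forall n x, p n (gd (p n.+1 x)) = gd (p n.+1 x);
  ps_span : forall n x, p n x = x ->
    exists a : 'I_K -> R, x = \sum_(l in S n) a l *: p n (g n l);
  ps_chainA : pieces_chain cA sA VA;
  ps_chainB : pieces_chain cB sB VB;
  ps_decomp : forall n x, exists a b,
    x - p n x = pieces_comb sA VA a n + pieces_comb sB VB b n;
  ps_indep : forall n a b y,
    pieces_comb sA VA a n + pieces_comb sB VB b n + p n y = 0 ->
    (forall k, (k < size sA)%N -> in_range (nth (0, 0) sA k) n -> a k = 0) /\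
    (forall k, (k < size sB)%N -> in_range (nth (0, 0) sB k) n -> b k = 0) }.

Lemma partial_split_swap p S sA VA cA sB VB cB :
  partial_split p S sA VA cA sB VB cB -> partial_split p S sB VB cB sA VA cA.
Proof.
case=> plin pid pcl pspan hA hB pdec pind; split => //.
  by move=> n x; have [a [b ->]] := pdec n x; exists b, a; rewrite addrC.
by move=> n a b y; rewrite (addrC (pieces_comb sB _ _ _)) => /pind [].
Qed.

Definition residual_rank S := (\sum_(n < N.+1) #|S n|)%N.

Section SplitOffPiece.
Variables (p : forall n, X n -> X n) (S : nat -> {set 'I_K}).
Arguments p : clear implicits.
Variables (sA : seq (nat * nat)) (VA : nat -> forall n, X n) (cA : R).
Variables (sB : seq (nat * nat)) (VB : nat -> forall n, X n) (cB : R).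
Hypothesis hps : partial_split p S sA VA cA sB VB cB.
Variables (i j : nat) (u : forall n, X n) (psi : forall n, X n -> R).
Arguments psi : clear implicits.
Hypothesis hu : forall n, in_range (i, j) n ->
  [/\ p n (u n) = u n, psi n (u n) = 1 & linear_for *%R (psi n)].
Hypothesis hdu : forall n, (i <= n < i + j)%N ->
  gd (u n.+1) = ((-1) ^+ i * cA) *: u n.
Hypothesis hdu0 : forall m, i = m.+1 -> gd (u m.+1) = 0.
Hypothesis hpsi : forall n, (i <= n < i + j)%N -> forall x, p n.+1 x = x ->
  psi n (gd x) = ((-1) ^+ i * cA) * psi n.+1 x.
Hypothesis hpsi_top : forall n, n = (i + j)%N -> forall x : X n.+1,
  p n.+1 x = x -> psi n (gd x) = 0.

Let plin := ps_linear hps.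
Arguments plin : clear implicits.
Let pid := ps_idem hps.
Let pclosed := ps_closed hps.

Definition cut n (x : X n) : X n :=
  if in_range (i, j) n then p n x - psi n (p n x) *: u n else p n x.
Arguments cut : clear implicits.

Lemma cut_linear n : linear (cut n).
Proof.
move=> a x y; rewrite /cut; case: ifP => hn; last by rewrite plin.
have [_ _ psil] := hu hn; rewrite plin psil.
by rewrite scalerBr scalerA scalerDl opprD addrACA.
Qed.
Arguments cut_linear : clear implicits.

Lemma p_cut n x : p n (cut n x) = cut n x.
Proof.
rewrite /cut; case: ifP => hn; last by rewrite pid.
have [pu _ _] := hu hn.
by rewrite (linear_forB (plin n)) (linear_forZ (plin n)) /= pid pu.
Qed.

Lemma psi_cut n x : in_range (i, j) n -> psi n (cut n x) = 0.
Proof.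
move=> hn; have [_ psiu psil] := hu hn.
by rewrite /cut hn (linear_forB psil) (linear_forZ psil) /= psiu mulr1 subrr.
Qed.

Lemma cut_p n x : cut n (p n x) = cut n x.
Proof. by rewrite /cut pid. Qed.

Lemma cut_idem n x : cut n (cut n x) = cut n x.
Proof.
rewrite {1}/cut p_cut; case: ifP => hn //.
by rewrite psi_cut // scale0r subr0.
Qed.

Lemma cut_closed n x : cut n (gd (cut n.+1 x)) = gd (cut n.+1 x).
Proof.
have pd : p n (gd (cut n.+1 x)) = gd (cut n.+1 x).
  by rewrite -p_cut pclosed.
rewrite /cut pd; case: ifP => hn //.
suff -> : psi n (gd (cut n.+1 x)) = 0 by rewrite scale0r subr0.
move: hn; rewrite /in_range /= => /andP [hin].
rewrite leq_eqVlt => /orP [/eqP top | hlt].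
  by apply: (hpsi_top top); rewrite p_cut.
have hn1 : in_range (i, j) n.+1 by rewrite /in_range /= (leq_trans hin _) ?hlt.
by rewrite hpsi ?hin ?p_cut // psi_cut ?mulr0.
Qed.

Lemma in_range_start : in_range (i, j) i.
Proof. by rewrite /in_range /= leqnn leq_addr. Qed.

Lemma cut_u : cut i (u i) = 0.
Proof.
have [pu psiu _] := hu in_range_start.
by rewrite /cut in_range_start pu psiu scale1r subrr.
Qed.

Lemma exists_pivot : exists b : 'I_K -> R, exists2 l0, l0 \in S i &
  b l0 \is a GRing.unit /\ u i = \sum_(l in S i) b l *: p i (g i l).
Proof.
have [pu psiu psil] := hu in_range_start.
have [b ub] := ps_span hps pu; exists b.
suff [l0 Sl0] :
    exists2 l0, l0 \in S i & b l0 * psi i (p i (g i l0)) \is a GRing.unit.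
  by rewrite unitrM => /andP [bl0 _]; exists l0.
apply: local_unit_summand hloc _.
suff <- : psi i (u i) = \sum_(l in S i) b l * psi i (p i (g i l)).
  by rewrite psiu unitr1.
rewrite ub (linear_for_sum psil); apply: eq_bigr => l _.
by rewrite (linear_forZ psil).
Qed.

Definition drop_generator l0 n := if n == i then S i :\ l0 else S n.

Lemma cut_span b l0 : l0 \in S i -> b l0 \is a GRing.unit ->
  u i = \sum_(l in S i) b l *: p i (g i l) ->
  forall n x, cut n x = x ->
  exists a : 'I_K -> R, x = \sum_(l in drop_generator l0 n) a l *: cut n (g n l).
Proof.
move=> Sl0 bl0 ub n x cx.
have cut_sum (c : 'I_K -> R) :
    cut n (\sum_(l in S n) c l *: p n (g n l)) =
    \sum_(l in S n) c l *: cut n (g n l).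
  rewrite (linear_for_sum (cut_linear n)); apply: eq_bigr => l _.
  by rewrite (linear_forZ (cut_linear n)) /= cut_p.
have px : p n x = x by rewrite -cx p_cut.
have [a xa] := ps_span hps px.
rewrite /drop_generator; case: eqP => [ni | _]; last first.
  by exists a; rewrite -cx xa cut_sum.
subst n; rewrite -cx xa cut_sum; apply: sum_drop_redundant Sl0 bl0 _ _.
by rewrite -cut_sum -ub cut_u.
Qed.

Let sA' := rcons sA (i, j).
Let VA' := extend_pieces sA VA u.

Lemma cut_decomp n x : exists a b,
  x - cut n x = pieces_comb sA' VA' a n + pieces_comb sB VB b n.
Proof.
have [a [b xab]] := ps_decomp hps x.
exists (fun k => if k == size sA then psi n (p n x) else a k), b.
rewrite pieces_comb_rcons eqxx (@eq_pieces_comb _ _ _ _ _ a); last first.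
  by move=> k hk; rewrite (ltn_eqF hk).
rewrite /cut; case: ifP => hn; last by rewrite addr0 xab.
by rewrite opprB addrCA xab addrCA addrA.
Qed.

Lemma cut_indep n a b y :
  pieces_comb sA' VA' a n + pieces_comb sB VB b n + cut n y = 0 ->
  (forall k, (k < size sA')%N -> in_range (nth (0, 0) sA' k) n -> a k = 0) /\
  (forall k, (k < size sB)%N -> in_range (nth (0, 0) sB k) n -> b k = 0).
Proof.
rewrite pieces_comb_rcons.
set T := (if in_range (i, j) n then a (size sA) *: u n else 0) => h.
have pT : p n (T + cut n y) = T + cut n y.
  rewrite (linear_forD (plin n)) p_cut /T; case: ifP => hn.
    by have [pu _ _] := hu hn; rewrite (linear_forZ (plin n)) /= pu.
  by rewrite (linear_for0 (plin n)).
have h' : pieces_comb sA VA a n + pieces_comb sB VB b n + p n (T + cut n y) = 0.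
  by rewrite pT addrA (addrAC (pieces_comb sA VA a n)).
have [hA hB] := ps_indep hps h'.
split=> // k; rewrite size_rcons ltnS leq_eqVlt => /orP [/eqP -> | hk]; last first.
  by rewrite nth_rcons hk; exact: hA.
rewrite nth_rcons ltnn eqxx => hn; have [_ psiu psil] := hu hn.
have : T + cut n y = 0.
  by move: h; rewrite (pieces_comb0 _ hA) (pieces_comb0 _ hB) add0r addr0.
move/(congr1 (psi n)); rewrite /T hn (linear_forD psil) (linear_forZ psil) /=.
by rewrite psiu mulr1 psi_cut // addr0 (linear_for0 psil).
Qed.

Lemma residual_rank_drop l0 : l0 \in S i ->
  (residual_rank (drop_generator l0) < residual_rank S)%N.
Proof.
move=> Sl0.
have iN : (i < N.+1)%N.
  rewrite ltnS leqNgt; apply/negP => Ni; have [_ psiu psil] := hu in_range_start.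
  move: psiu; rewrite (bound Ni (u i)) (linear_for0 psil) => /eqP.
  by rewrite eq_sym oner_eq0.
rewrite /residual_rank (bigD1 (Ordinal iN)) //.
rewrite [X in (_ < X)%N](bigD1 (Ordinal iN)) //=.
rewrite /drop_generator eqxx (eq_bigr (fun k : 'I_N.+1 => #|S k|)); last first.
  by move=> k hk; rewrite ifN //; apply: contraNneq hk => ki; apply/eqP/val_inj.
by rewrite ltn_add2r; apply/proper_card/properD1.
Qed.

Lemma split_off_piece : exists p' S',
  partial_split p' S' (rcons sA (i, j)) (extend_pieces sA VA u) cA sB VB cB /\
  (residual_rank S' < residual_rank S)%N.
Proof.
have [b [l0 Sl0 [bl0 ub]]] := exists_pivot.
exists cut, (drop_generator l0); split; last exact: residual_rank_drop.
split; [exact: cut_linear | exact: cut_idem | exact: cut_closed | | | | |].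
- exact: cut_span Sl0 bl0 ub.
- exact: pieces_chain_rcons (ps_chainA hps) hdu hdu0.
- exact: ps_chainB hps.
- exact: cut_decomp.
- exact: cut_indep.
Qed.

End SplitOffPiece.

Hypothesis dd : forall n (x : X n.+2), gd (gd x) = 0.
Variable r : R.
Hypothesis hgen : forall x : R, x \isn't a GRing.unit -> exists a, x = a * r.
Hypothesis hrr : r * r = 0.
Variable cf : forall n, 'I_K -> X n -> R.
Arguments cf : clear implicits.
Hypothesis cflin : forall n l, linear_for *%R (cf n l).
Hypothesis dual : forall n (x : X n), x = \sum_(l < K) cf n l x *: g n l.

(* Some coordinate of [z] is a unit, since otherwise all of them lie in
   [m = rR] and [z = p z] would be divisible by [r] in the image of [p]. *)
Lemma indivisible_functional p n (z : X n) :
  linear (p n) -> p n z = z -> ~ (exists y, z = r *: p n y) ->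
  exists phi : X n -> R, linear_for *%R phi /\ phi z = 1.
Proof.
move=> plin pz zr.
have [/existsP [l zl] | /existsPn zl] :=
  boolP [exists l, cf n l z \is a GRing.unit].
  exists (fun x => (cf n l z)^-1 * cf n l x); split; last by rewrite mulVr.
  by move=> a x y; rewrite cflin mulrDr mulrCA.
have /fin_all_exists [A hA] : forall l, exists a, cf n l z = a * r.
  by move=> l; apply/hgen/zl.
case: zr; exists (\sum_l A l *: g n l).
rewrite -{1}pz {1}(dual z) !(linear_for_sum plin) scaler_sumr.
by apply: eq_bigr => l _; rewrite !(linear_forZ plin) /= hA scalerA mulrC.
Qed.

Lemma zero_or_top_degree p :
  (forall n x, p n x = 0) \/
  exists T, (exists x : X T, p T x != 0) /\
            (forall n, (T < n)%N -> forall x : X n, p n x = 0).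
Proof.
have [[n0 [x0 px0]] | p0] := classic (exists n (x : X n), p n x != 0); last first.
  by left=> n x; apply/eqP; apply: contraT => px; case: p0; exists n, x.
pose nz n := if excluded_middle_informative (exists x : X n, p n x != 0)
              then true else false.
have nzP n : reflect (exists x : X n, p n x != 0) (nz n).
  by rewrite /nz; case: excluded_middle_informative => h; constructor.
have ex_nz : exists n, nz n by exists n0; apply/nzP; exists x0.
have nz_le n : nz n -> (n <= N)%N.
  move/nzP => [x px]; rewrite leqNgt; apply/negP => Nn.
  by move: px; rewrite (bound Nn (p n x)) eqxx.
have [T /nzP nzT Tmax] := ex_maxnP ex_nz nz_le.
right; exists T; split=> // n Tn x; apply/eqP; apply: contraT => px.
by move: Tn; rewrite ltnNge Tmax //; apply/nzP; exists x.
Qed.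

Definition divided_differential p (Delta : forall t, X t.+1 -> X t) :=
  forall t, [/\ linear (Delta t), forall x, p t (Delta t x) = Delta t x &
              forall x, p t.+1 x = x -> gd x = r *: Delta t x].

Lemma exists_divided_differential p :
  (forall n, linear (p n)) -> (forall n x, p n (p n x) = p n x) ->
  (forall t (x : X t.+1), p t.+1 x = x -> exists y, gd x = r *: p t y) ->
  exists Delta, divided_differential p Delta.
Proof.
move=> plin pid hdiv.
have hY t l : exists y : X t, gd (p t.+1 (g t.+1 l)) = r *: p t y.
  by apply: hdiv; rewrite pid.
pose Y t l := proj1_sig (constructive_indefinite_description _ (hY t l)).
have gdY t l : gd (p t.+1 (g t.+1 l)) = r *: p t (Y t l).
  exact: proj2_sig (constructive_indefinite_description _ (hY t l)).
exists (fun t x => \sum_l cf t.+1 l (p t.+1 x) *: p t (Y t l)) => t.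
split.
- move=> a x y /=; rewrite plin scaler_sumr -big_split /=.
  by apply: eq_bigr => l _; rewrite cflin scalerDl scalerA.
- move=> x; rewrite (linear_for_sum (plin t)); apply: eq_bigr => l _.
  by rewrite (linear_forZ (plin t)) /= pid.
- move=> x px; rewrite -{1}px {1}(dual x) (linear_for_sum (plin _)).
  rewrite (linear_for_sum (dlin _)) scaler_sumr; apply: eq_bigr => l _.
  rewrite (linear_forZ (plin _)) (linear_forZ (dlin _)) /= gdY px.
  by rewrite scalerA mulrC -scalerA.
Qed.

(* [u] spans a copy of [Sigma^i E_(t-i)] (differential [r]) in the residual,
   and the functionals [psi] split it off. *)
Definition residual_chain p i t u (psi : forall n, X n -> R) :=
  [/\ (i <= t)%N,
      (forall n, (i <= n <= t)%N ->
         [/\ p n (u n) = u n, psi n (u n) = 1 & linear_for *%R (psi n)]),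
      (forall n, (i <= n < t)%N -> gd (u n.+1) = r *: u n /\
         (forall x, p n.+1 x = x -> psi n (gd x) = r * psi n.+1 x))
    & (forall m, i = m.+1 -> gd (u m.+1) = 0)].

(* The last hypothesis says [d v = 0] when [t > 0], phrased without casting
   [v] along [t = m.+1]. *)
Lemma residual_chain_single p t (v : X t) (phi : X t -> R) :
  p t v = v -> linear_for *%R phi -> phi v = 1 ->
  (forall m u, t = m.+1 -> u t = v -> gd (u m.+1) = 0) ->
  exists u psi, u t = v /\ residual_chain p t t u psi.
Proof.
move=> pv phil phiv v0.
exists (dfwith (fun n => 0 : X n) v), (dfwith (fun n (_ : X n) => 0 : R) phi).
split; first exact: dfwith_in.
split=> // [n | n | m tm]; first by rewrite -eqn_leq => /eqP <-; rewrite !dfwith_in.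
  by rewrite ltnNge => /andP [->].
by apply: v0 tm _; rewrite dfwith_in.
Qed.

Lemma residual_chain_extend p Delta t (v : X t.+1) i u psi :
  divided_differential p Delta -> p t.+1 v = v -> u t = Delta t v ->
  residual_chain p i t u psi ->
  residual_chain p i t.+1 (dfwith u v) (dfwith psi (fun y => psi t (Delta t y))).
Proof.
move=> hD pv ut [it hu hd hbot]; have [Dlin _ dD] := hD t.
have itt : (i <= t <= t)%N by rewrite it leqnn.
have [_ psiu psil] := hu t itt.
have out (T : nat -> Type) (f : forall n, T n) (x : T t.+1) n :
    (n <= t)%N -> dfwith f x n = f n.
  by move=> nt; apply: dfwith_out; rewrite gtn_eqF.
split=> [|n|n|m im]; first exact: leq_trans it (leqnSn t).
- move=> /andP [iN]; rewrite leq_eqVlt ltnS => /orP [/eqP -> | nt].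
    rewrite !dfwith_in -ut; split=> //.
    by move=> a x y /=; rewrite Dlin psil.
  by rewrite !out //; apply: hu; rewrite iN.
- move=> /andP [iN]; rewrite ltnS leq_eqVlt => /orP [/eqP -> | nt].
    rewrite !dfwith_in !out //; split; first by rewrite ut dD.
    by move=> x px; rewrite dD // (linear_forZ psil).
  by rewrite !out ?(ltnW nt) //; apply: hd; rewrite iN.
- by rewrite out ?hbot // -im.
Qed.

Lemma descending_chain p Delta :
  (forall n, linear (p n)) -> divided_differential p Delta ->
  forall t (v : X t), p t v = v -> ~ (exists y, v = r *: p t y) ->
  exists i u psi, u t = v /\ residual_chain p i t u psi.
Proof.
move=> plin hD; elim=> [|t IH] v pv vr.
  have [phi [phil phiv]] := indivisible_functional (plin 0%N) pv vr.
  have v0 m (u : forall n, X n) : 0 = m.+1 -> u 0%N = v -> gd (u m.+1) = 0 by [].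
  have [u [psi chain]] := residual_chain_single pv phil phiv v0.
  by exists 0%N, u, psi.
have [phi [phil phiv]] := indivisible_functional (plin _) pv vr.
have [dv0 | dvn0] := classic (gd v = 0).
  have v0 m u : t.+1 = m.+1 -> u t.+1 = v -> gd (u m.+1) = 0 by case=> <- ->.
  have [u [psi chain]] := residual_chain_single pv phil phiv v0.
  by exists t.+1, u, psi.
have [_ pD dD] := hD t.
have wr : ~ (exists y, Delta t v = r *: p t y).
  by case=> y wy; apply: dvn0; rewrite dD // wy scalerA hrr scale0r.
have [i [u [psi [ut chain]]]] := IH _ (pD v) wr.
exists i, (dfwith u v), (dfwith psi (fun y => psi t (Delta t y))).
by split; [exact: dfwith_in | exact: residual_chain_extend hD pv ut chain].
Qed.

Lemma lengths_one_rcons s i : lengths_one s -> lengths_one (rcons s (i, 1%N)).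
Proof.
move=> s1 k; rewrite size_rcons ltnS leq_eqVlt => /orP [/eqP -> | ks].
  by rewrite nth_rcons ltnn eqxx.
by rewrite nth_rcons ks; apply: s1.
Qed.

(* [x] and [(-1)^t d x] span a copy of [Sigma^t E_1] with differential [1]. *)
Lemma split_unit_piece p S sA VA sB VB t (x : X t.+1) :
  partial_split p S sA VA 1 sB VB r ->
  p t.+1 x = x -> ~ (exists y, gd x = r *: p t y) ->
  exists p' S' VA', partial_split p' S' (rcons sA (t, 1%N)) VA' 1 sB VB r /\
    (residual_rank S' < residual_rank S)%N.
Proof.
move=> hps px dxr; have [plin _ pcl _ _ _ _ _] := hps.
have pdx : p t (gd x) = gd x by rewrite -px pcl.
have [phi [phil phidx]] := indivisible_functional (plin t) pdx dxr.
pose e : R := (-1) ^+ t.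
pose u := dfwith (dfwith (fun n => 0 : X n) (e *: gd x)) x.
pose psi := dfwith (dfwith (fun n (_ : X n) => 0 : R) (fun y : X t => e * phi y))
              (fun y : X t.+1 => phi (gd y)).
have tt1 : t.+1 != t by rewrite gtn_eqF.
have ut1 : u t.+1 = x by rewrite /u dfwith_in.
have ut : u t = e *: gd x by rewrite /u dfwith_out ?dfwith_in.
have psit1 : psi t.+1 = (fun y => phi (gd y)) by rewrite /psi dfwith_in.
have psit : psi t = (fun y => e * phi y) by rewrite /psi dfwith_out ?dfwith_in.
have range n : in_range (t, 1%N) n -> n = t \/ n = t.+1.
  by rewrite /in_range /= addn1 => /andP [tn nt]; lia.
have below n : (t <= n < t + 1)%N -> n = t by rewrite addn1 ltnS -eqn_leq => /eqP.
have hu n : in_range (t, 1%N) n ->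
    [/\ p n (u n) = u n, psi n (u n) = 1 & linear_for *%R (psi n)].
  move=> /range [-> | ->]; rewrite ?ut ?psit ?ut1 ?psit1; split=> //.
  - by rewrite (linear_forZ (plin t)) /= pdx.
  - by rewrite (linear_forZ phil) /= phidx mulr1 mulr_sign_sq.
  - by move=> a y z; rewrite phil mulrDr mulrCA.
  - by move=> a y z; rewrite /= dlin phil.
have hdu n : (t <= n < t + 1)%N -> gd (u n.+1) = ((-1) ^+ t * 1) *: u n.
  by move=> /below ->; rewrite ut1 ut mulr1 scalerA mulr_sign_sq scale1r.
have hdu0 m : t = m.+1 -> gd (u m.+1) = 0.
  by move=> tm; subst t; rewrite ut (linear_forZ (dlin m)) /= dd scaler0.
have hpsi n : (t <= n < t + 1)%N -> forall y, p n.+1 y = y ->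
    psi n (gd y) = ((-1) ^+ t * 1) * psi n.+1 y.
  by move=> /below -> y _; rewrite psit psit1 mulr1.
have htop n : n = (t + 1)%N -> forall y : X n.+1, p n.+1 y = y -> psi n (gd y) = 0.
  by rewrite addn1 => -> y _; rewrite psit1 /= dd (linear_for0 phil).
have [p' [S' [hps' rank]]] := split_off_piece hps hu hdu hdu0 hpsi htop.
by exists p', S', (extend_pieces sA VA u).
Qed.

(* As [r^2 = 0], a nonzero element [r y] of the residual has the indivisible
   companion [y]. *)
Lemma top_indivisible p T (x0 : X T) :
  (forall n x, p n (p n x) = p n x) -> p T x0 != 0 ->
  exists v : X T, p T v = v /\ ~ (exists y, v = r *: p T y).
Proof.
move=> pid px0; have [[y xy] | x0r] := classic (exists y, p T x0 = r *: p T y).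
  exists (p T y); split=> [|[z yz]]; first exact: pid.
  by move: px0; rewrite xy yz scalerA hrr scale0r eqxx.
by exists (p T x0); rewrite pid.
Qed.

(* Renormalising by [e^n], [e = (-1)^i], turns the differential [r] of a
   residual chain into the differential [(-1)^i r] of [Sigma^i E_j]. *)
Lemma split_r_piece p S sA VA sB VB T (x0 : X T) :
  partial_split p S sA VA 1 sB VB r ->
  (forall t (x : X t.+1), p t.+1 x = x -> exists y, gd x = r *: p t y) ->
  p T x0 != 0 -> (forall n, (T < n)%N -> forall x : X n, p n x = 0) ->
  exists p' S' sB' VB', partial_split p' S' sA VA 1 sB' VB' r /\
    (residual_rank S' < residual_rank S)%N.
Proof.
move=> hps hdiv px0 top; have [plin pid _ _ _ _ _ _] := hps.
have [Delta hD] := exists_divided_differential plin pid hdiv.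
have [v [pv vr]] := top_indivisible pid px0.
have [i [u [psi [ut [iT hu hd hbot]]]]] := descending_chain plin hD pv vr.
pose e : R := (-1) ^+ i.
pose u' n : X n := e ^+ n *: u n.
pose psi' n (y : X n) := e ^+ n * psi n y.
have hu' n : in_range (i, (T - i)%N) n ->
    [/\ p n (u' n) = u' n, psi' n (u' n) = 1 & linear_for *%R (psi' n)].
  rewrite /in_range /= subnKC // => /hu [pu psiu psil]; split.
  - by rewrite (linear_forZ (plin n)) /= pu.
  - rewrite /psi' /u' (linear_forZ psil) /= psiu mulr1.
    by rewrite -exprMn mulr_sign_sq expr1n.
  - by move=> a y z; rewrite /psi' psil mulrDr mulrCA.
have hdu' n : (i <= n < i + (T - i))%N -> gd (u' n.+1) = ((-1) ^+ i * r) *: u' n.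
  rewrite subnKC // => /hd [dun _].
  rewrite /u' (linear_forZ (dlin n)) /= dun !scalerA exprS /e.
  by congr (_ *: _); ring.
have hdu0' m : i = m.+1 -> gd (u' m.+1) = 0.
  by move=> im; rewrite /u' (linear_forZ (dlin m)) /= hbot // scaler0.
have hpsi' n : (i <= n < i + (T - i))%N -> forall y, p n.+1 y = y ->
    psi' n (gd y) = ((-1) ^+ i * r) * psi' n.+1 y.
  rewrite subnKC // => /hd [_ dpsi] y py; rewrite /psi' dpsi // exprS.
  transitivity ((e * e) * (e ^+ n * (r * psi n.+1 y))).
    by rewrite mulr_sign_sq mul1r.
  by rewrite /e; ring.
have htop' n : n = (i + (T - i))%N -> forall y : X n.+1, p n.+1 y = y ->
    psi' n (gd y) = 0.
  rewrite subnKC // => -> y py.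
  have iTT : (i <= T <= T)%N by rewrite iT leqnn.
  have [_ _ psil] := hu T iTT.
  by rewrite -py top // (linear_for0 (dlin T)) /psi' (linear_for0 psil) mulr0.
have [p' [S' [hps' rank]]] :=
  split_off_piece (partial_split_swap hps) hu' hdu' hdu0' hpsi' htop'.
exists p', S', (rcons sB (i, (T - i)%N)), (extend_pieces sB VB u').
by split=> //; exact: partial_split_swap.
Qed.

Lemma split_step p S sA VA sB VB :
  partial_split p S sA VA 1 sB VB r -> lengths_one sA ->
  (forall n x, p n x = 0) \/
  exists p' S' sA' VA' sB' VB',
    [/\ partial_split p' S' sA' VA' 1 sB' VB' r, lengths_one sA'
      & (residual_rank S' < residual_rank S)%N].
Proof.
move=> hps sA1; have [p0 | [T [[x0 px0] top]]] := zero_or_top_degree p.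
  by left.
right; have [[t [x [px dxr]]] | hdiv] :=
  classic (exists t (x : X t.+1), p t.+1 x = x /\ ~ (exists y, gd x = r *: p t y)).
  have [p' [S' [VA' [hps' rank]]]] := split_unit_piece hps px dxr.
  exists p', S', (rcons sA (t, 1%N)), VA', sB, VB.
  by split=> //; apply: lengths_one_rcons.
have dr t (x : X t.+1) : p t.+1 x = x -> exists y, gd x = r *: p t y.
  by move=> px; apply: NNPP => dxr; apply: hdiv; exists t, x.
have [p' [S' [sB' [VB' [hps' rank]]]]] := split_r_piece hps dr px0 top.
by exists p', S', sA, VA, sB', VB'.
Qed.

Lemma split_exhaust p S sA VA sB VB :
  partial_split p S sA VA 1 sB VB r -> lengths_one sA ->
  exists p' S' sA' VA' sB' VB',
    [/\ partial_split p' S' sA' VA' 1 sB' VB' r, lengths_one sA'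
      & forall n x, p' n x = 0].
Proof.
move: {2}(residual_rank S) (leqnn (residual_rank S)) => m.
elim: m p S sA VA sB VB => [|m IH] p S sA VA sB VB rankS hps sA1;
  (have [p0 | [p' [S' [sA' [VA' [sB' [VB' [hps' sA1' rank]]]]]]]] :=
     split_step hps sA1; first by exists p, S, sA, VA, sB, VB).
  by move: (leq_trans rank rankS); rewrite ltn0.
by apply: IH hps' sA1'; rewrite -ltnS (leq_trans rank rankS).
Qed.

End Splitting.

Lemma chain_iso_refl (R : comUnitRingType) (Y : gmod R) : chain_iso Y Y.
Proof. by exists (fun n (y : Y n) => y); split=> //; split=> // n; exists id. Qed.

Lemma chain_iso_of_map (R : comUnitRingType) (Y Z : gmod R)
    (h : forall n, Z n -> Y n) :
  (forall n, linear (h n)) -> (forall n, injective (h n)) ->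
  (forall n (y : Y n), exists z, h n z = y) ->
  (forall n (z : Z n.+1), h n (gd z) = gd (h n.+1 z)) -> chain_iso Y Z.
Proof.
move=> hlin hinj hsurj hd.
pose k n y := proj1_sig (constructive_indefinite_description _ (hsurj n y)).
have kK n : cancel (k n) (h n).
  by move=> y; exact: proj2_sig (constructive_indefinite_description _ (hsurj n y)).
exists k; split=> [n a y1 y2|]; last split=> [n|n y].
- by apply: (hinj n); rewrite hlin !kK.
- by exists (h n) => [|z]; [exact: kK | apply: (hinj n); rewrite kK].
- by apply: (hinj n); rewrite hd !kK.
Qed.

Section Perfect.
Variables (R : comUnitRingType) (X : gmod R).

Lemma total_fg_bounded : total_fg X ->
  exists N, forall n, (N < n)%N -> forall x : X n, x = 0.
Proof.
move=> [K [G hG]]; exists (\max_(l < K) tag (G l))%N => n Nn x.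
have [c ->] := hG n x; apply: big1 => l _.
rewrite /comp_deg untag_dflt ?scaler0 //; apply: contraTneq Nn => <-.
by rewrite -leqNgt (leq_bigmax (F := fun l => tag (G l))).
Qed.

Lemma projective_coordinates (M : lmodType R) K (g : 'I_K -> M) :
  projective M -> (forall x, exists c : 'I_K -> R, x = \sum_l c l *: g l) ->
  exists cf : 'I_K -> M -> R,
    (forall l, linear_for *%R (cf l)) /\ forall x, x = \sum_l cf l x *: g l.
Proof.
move=> Mproj gspan.
pose comb (c : {ffun 'I_K -> R^o}) := \sum_l c l *: g l.
have comb_lin : linear comb.
  move=> a c c'; rewrite /comb scaler_sumr -big_split; apply: eq_bigr => l _.
  by rewrite !ffunE scalerDl scalerA.
have comb_onto x : exists c, comb c = x.
  have [c ->] := gspan x; exists [ffun l => c l].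
  by apply: eq_bigr => l _; rewrite ffunE.
have [s [slin sK]] := Mproj _ _ comb id comb_lin (fun _ _ _ => erefl) comb_onto.
exists (fun l x => s x l); split=> [l a x y | x] /=; first by rewrite slin !ffunE.
by rewrite -{1}(sK x).
Qed.

Lemma perfect_coordinates : perfect X ->
  exists K (g : forall n, 'I_K -> X n) (cf : forall n, 'I_K -> X n -> R),
    (forall n l, linear_for *%R (cf n l)) /\
    forall n (x : X n), x = \sum_(l < K) cf n l x *: g n l.
Proof.
move=> [_ [Xproj [K [G hG]]]]; exists K, (fun n l => comp_deg n (G l)).
have coords n : exists cf : 'I_K -> X n -> R, (forall l, linear_for *%R (cf l)) /\
    forall x, x = \sum_l cf l x *: comp_deg n (G l).
  exact: projective_coordinates (Xproj n) (hG n).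
have /all_sig [cf hcf] := fun n => constructive_indefinite_description _ (coords n).
by exists cf; split=> n; case: (hcf n).
Qed.

End Perfect.

Lemma exhausted_split_iso (R : comUnitRingType) (X : gmod R) K
    (g : forall n, 'I_K -> X n) p S sA VA sB VB (c : R) :
  (forall n, linear (@gd R X n)) ->
  partial_split g p S sA VA 1 sB VB c -> (forall n x, p n x = 0) ->
  chain_iso X (gsum (sumE 1 sA) (sumE c sB)).
Proof.
move=> dlin [_ _ _ _ chainA chainB decomp indep] p0.
pose h n (fg : gsum (sumE 1 sA) (sumE c sB) n) : X n :=
  pieces_comb sA VA (sumE_coef fg.1) n + pieces_comb sB VB (sumE_coef fg.2) n.
apply: (@chain_iso_of_map _ _ _ h).
- move=> n a [f1 f2] [f1' f2'].
  by rewrite /h /= !pieces_comb_coefD scalerDr addrACA.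
- move=> n [f1 f2] [f1' f2']; rewrite /h /= => e.
  have e' : pieces_comb sA VA (fun k => sumE_coef f1 k - sumE_coef f1' k) n +
      pieces_comb sB VB (fun k => sumE_coef f2 k - sumE_coef f2' k) n + p n 0 = 0.
    by rewrite p0 addr0 !pieces_combB addrACA -opprD e subrr.
  have [eqA eqB] := indep n _ _ _ e'.
  congr pair; apply/ffunP => k; apply/eqP; rewrite -subr_eq0 -!sumE_coefE.
  + by rewrite eqA ?ltn_ord ?(valP k).
  + by rewrite eqB ?ltn_ord ?(valP k).
- move=> n x; have [a [b xab]] := decomp n x.
  exists ([ffun k : act sA n => a (val k)], [ffun k : act sB n => b (val k)]).
  by rewrite /h /= !pieces_comb_coef_ffun -xab p0 subr0.
- move=> n [f1 f2]; rewrite /h /= (linear_forD (dlin n)).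
  by rewrite !(pieces_comb_d dlin).
Qed.

Lemma partial_split_init (R : comUnitRingType) (X : gmod R) K
    (g : forall n, 'I_K -> X n) (cf : forall n, 'I_K -> X n -> R) (c : R) :
  (forall n (x : X n), x = \sum_(l < K) cf n l x *: g n l) ->
  partial_split g (fun n x => x) (fun _ => setT) [::] (fun _ n => 0) 1
    [::] (fun _ n => 0) c.
Proof.
move=> dual; split=> // [n x _|n x].
  by exists (cf n ^~ x); rewrite {1}(dual n x); apply: eq_bigl => l; rewrite inE.
by exists (fun _ => 0), (fun _ => 0); rewrite subrr /pieces_comb !big_ord0 addr0.
Qed.

Theorem lemma5p2 (R : comUnitRingType) (hloc : local_ring R) (r : R)
  (hr : in_max_ideal r)
  (hgen : forall x : R, in_max_ideal x -> exists a : R, x = a * r)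
  (hsq : forall x y : R, in_max_ideal x -> in_max_ideal y -> x * y = 0)
  (X : gmod R) (hX : perfect X) :
  exists P Q : gmod R,
    [/\ is_complex P, is_complex Q, acyclic P,
        (exists s : seq (nat * nat), chain_iso Q (sumE r s))
      & chain_iso X (gsum P Q)].
Proof.
have hrr : r * r = 0 by apply: hsq.
have [[dlin dd] [_ Xfg]] := hX.
have [N bound] := total_fg_bounded Xfg.
have [K [g [cf [cflin dual]]]] := perfect_coordinates hX.
have nil1 : lengths_one [::] by [].
have [p [S [sA [VA [sB [VB [hps sA1 p0]]]]]]] :=
  split_exhaust dlin bound hloc dd hgen hrr cflin dual
    (partial_split_init r dual) nil1.
exists (sumE 1 sA), (sumE r sB); split.
- by apply: sumE_is_complex; right.
- by apply: sumE_is_complex; left.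
- exact: sumE_acyclic.
- by exists sB; apply: chain_iso_refl.
- exact: exhausted_split_iso dlin hps p0.
Qed.
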